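(* Let $X$ be a real Banach space, $A$ a non-empty subset of $X$, and $F_1,F_2$ non-empty closed bounded subsets of $X$. (1) Suppose $r(F_1,x)>r(F_2,x)$ for each $x\in A$. If $F_1$ is remotal (respectively uniquely remotal, strongly remotal, SUR, sup-compact) on $A$, then $F_1\cup F_2$ is remotal (respectively uniquely remotal, strongly remotal, SUR, sup-compact) on $A$. If in addition $\inf\{r(F_1,x)-r(F_2,x):x\in A\}>0$ and $F_1$ is USUR on $A$, then $F_1\cup F_2$ is USUR on $A$. (2) If $r(F_1,x)=r(F_2,x)$ for each $x\in A$ and $F_1,F_2$ are both sup-compact (respectively strongly remotal, remotal) on $A$, then $F_1\cup F_2$ is sup-compact (respectively strongly remotal, remotal) on $A$.
   Context: $B_X$ is the closed unit ball. For non-empty bounded $F$, $x\in X$, $\delta\ge0$: $r(F,x)=\sup_{y\in F}\|x-y\|$, $Q_F(x,\delta)=\{y\in F:\|x-y\|\ge r(F,x)-\delta\}$, $Q_F(x)=Q_F(x,0)$. On a set $A$, $F$ is: remotal if $Q_F(x)\neq\emptyset$ for each $x\in A$; uniquely remotal if $Q_F(x)$ is a singleton for each $x\in A$; strongly remotal if for every $x\in A$ and $\epsilon>0$ there is $\delta>0$ with $Q_F(x,\delta)\subseteq Q_F(x)+\epsilon B_X$; SUR if both uniquely remotal and strongly remotal; USUR if uniquely remotal and for every $\epsilon>0$ there is $\delta>0$ with $Q_F(x,\delta)\subseteq Q_F(x)+\epsilon B_X$ for all $x\in A$; sup-compact if for each $x\in A$ every sequence $(y_n)$ in $F$ with $\|x-y_n\|\to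 r(F,x)$ has a subsequence converging to an element of $F$. *)

From HB Require Import structures.
From mathcomp Require Import all_boot all_order all_algebra.
From mathcomp Require Import all_classical all_reals all_analysis.
Set Implicit Arguments. Unset Strict Implicit. Unset Printing Implicit Defensive.
Import Order.TTheory GRing.Theory Num.Theory.
Import numFieldNormedType.Exports.
Local Open Scope classical_set_scope.
Local Open Scope ring_scope.

Section Remotal.
Variables (R : realType) (X : normedModType R).

Definition farthest_dist (F : set X) (x : X) : R :=
  sup [set `|x - y| | y in F].

Definition farthest_pts (F : set X) (x : X) (delta : R) : set X :=
  [set y | F y /\ farthest_dist F x - delta <= `|x - y|].

Definition farthest_set (F : set X) (x : X) : set X := farthest_pts F x 0.

Definition enlarge (S : set X) (eps : R) : set X :=
  [set z | exists2 q, S q & `|z - q| <= eps].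

Definition remotal_on (F A : set X) : Prop :=
  forall x, A x -> farthest_set F x !=set0.

Definition uniquely_remotal_on (F A : set X) : Prop :=
  forall x, A x -> exists y, farthest_set F x = [set y].

Definition strongly_remotal_on (F A : set X) : Prop :=
  forall x, A x -> forall eps : R, 0 < eps ->
    exists2 delta : R, 0 < delta &
      farthest_pts F x delta `<=` enlarge (farthest_set F x) eps.

Definition SUR_on (F A : set X) : Prop :=
  uniquely_remotal_on F A /\ strongly_remotal_on F A.

Definition USUR_on (F A : set X) : Prop :=
  uniquely_remotal_on F A /\
  forall eps : R, 0 < eps ->
    exists2 delta : R, 0 < delta &
      forall x, A x -> farthest_pts F x delta `<=` enlarge (farthest_set F x) eps.

Definition sup_compact_on (F A : set X) : Prop :=
  forall x, A x -> forall u : nat -> X, (forall n, F (u n)) ->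
    (fun n => `|x - u n|) @ \oo --> farthest_dist F x ->
    exists phi : nat -> nat, {homo phi : m n / (m < n)%N >-> (m < n)%N} /\
      exists2 y, F y & (u \o phi) @ \oo --> y.

End Remotal.

From HB Require Import structures.
From mathcomp Require Import all_boot all_order all_algebra.
From mathcomp Require Import all_classical all_reals all_analysis.
From mathcomp Require Import lra.

(* If r(F2,x) < r(F1,x), no point of F2 is delta-farthest from x for delta below
   the gap r(F1,x) - r(F2,x), so Q_{F1 u F2}(x,delta) = Q_{F1}(x,delta) and every
   property passes from F1 to the union (uniformly in x when the gap is bounded
   below, which is what USUR needs).  If r(F1,x) = r(F2,x), then
   Q_{F1 u F2}(x,delta) = Q_{F1}(x,delta) u Q_{F2}(x,delta), and a maximizing
   sequence in F1 u F2 visits F1 or F2 infinitely often, giving a maximizing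
   subsequence in one of them. *)

Set Implicit Arguments.
Unset Strict Implicit.
Unset Printing Implicit Defensive.
Import Order.TTheory GRing.Theory Num.Theory.
Import numFieldNormedType.Exports.
Local Open Scope classical_set_scope.
Local Open Scope ring_scope.

Definition infinitely_often (P : nat -> Prop) : Prop :=
  forall N, exists n, (N <= n)%N /\ P n.

Lemma eventually_infinitely_often (P : nat -> Prop) :
  (\forall n \near \oo, P n) -> infinitely_often P.
Proof.
move=> [M _ MP] N; exists (maxn M N); split; first exact: leq_maxr.
by apply: MP; exact: leq_maxl.
Qed.

Lemma infinitely_often_or (P Q : nat -> Prop) :
  (forall n, P n \/ Q n) -> infinitely_often P \/ infinitely_often Q.
Proof.
move=> PQ; have [|/existsNP[M notP]] := pselect (infinitely_often P); first by left.
right; apply: eventually_infinitely_often; near=> n.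
have Mn : (M <= n)%N by near: n; exact: nbhs_infty_ge.
by have [Pn|//] := PQ n; exfalso; apply: notP; exists n.
Unshelve. all: by end_near.
Qed.

Lemma infinitely_often_subseq (P : nat -> Prop) : infinitely_often P ->
  exists phi : nat -> nat, {homo phi : m n / (m < n)%N} /\ forall k, P (phi k).
Proof.
move=> /choice[next next_spec].
pose phi := fix phi k := if k is k'.+1 then next (phi k').+1 else next 0%N.
exists phi; split; last by case=> [|k]; apply: (next_spec _).2.
apply: homo_ltn; first exact: ltn_trans.
by move=> k; exact: (next_spec (phi k).+1).1.
Qed.

Lemma cvg_comp_increasing (T : topologicalType) (u : nat -> T) (phi : nat -> nat)
    (l : T) :
  {homo phi : m n / (m < n)%N} -> u @ \oo --> l -> (u \o phi) @ \oo --> l.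
Proof.
move=> phi_incr; apply: cvg_comp; apply/cvgnyPge => N.
have phi_ge n : (n <= phi n)%N.
  by elim: n => // n ih; apply: leq_ltn_trans ih _; exact: phi_incr.
by exists N => // n /= Nn; exact: leq_trans Nn (phi_ge n).
Qed.

Section FarthestPoints.
Context {R : realType} {X : normedModType R}.
Implicit Types (F G : set X) (x y : X) (d e : R).

Lemma farthest_dist_ubound F x : bounded_set F -> has_ubound [set `|x - y| | y in F].
Proof.
move=> [M [_ FM]]; exists (`|x| + (M + 1)) => _ [y Fy <-].
rewrite (le_trans (ler_normB _ _))// lerD2l.
by apply: (FM (M + 1)) => //; rewrite ltrDl.
Qed.

Lemma farthest_dist_ge F x y : bounded_set F -> F y -> `|x - y| <= farthest_dist F x.
Proof.
move=> Fb Fy; apply: sup_upper_bound; last by exists y.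
by split; [exists `|x - y|, y | exact: farthest_dist_ubound].
Qed.

Lemma farthest_dist_le F x c : F !=set0 -> (forall y, F y -> `|x - y| <= c) ->
  farthest_dist F x <= c.
Proof.
move=> [y Fy] Fc; apply: ge_sup; first by exists `|x - y|, y.
by move=> _ [z Fz <-]; exact: Fc.
Qed.

Lemma bounded_setU F G : bounded_set F -> bounded_set G -> bounded_set (F `|` G).
Proof. by rewrite /= /bounded_near; apply: filterS2 => M FM GM z [/FM|/GM]. Qed.

Lemma farthest_distU F G x : F !=set0 -> G !=set0 -> bounded_set F -> bounded_set G ->
  farthest_dist (F `|` G) x = Num.max (farthest_dist F x) (farthest_dist G x).
Proof.
move=> [y Fy] G0 Fb Gb; apply/le_anti/andP; split.
  apply: farthest_dist_le => [|z [Fz|Gz]]; first by exists y; left.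
    by rewrite le_max farthest_dist_ge.
  by rewrite le_max [X in _ || X]farthest_dist_ge ?orbT.
have FGb := bounded_setU Fb Gb.
rewrite ge_max; apply/andP; split.
- by apply: farthest_dist_le => [|z Fz]; [exists y | apply: farthest_dist_ge => //; left].
- by apply: farthest_dist_le => // z Gz; apply: farthest_dist_ge => //; right.
Qed.

Lemma farthest_ptsS F x d d' : d <= d' -> farthest_pts F x d `<=` farthest_pts F x d'.
Proof. by move=> dd' y [Fy le_y]; split => //; apply: le_trans le_y; rewrite lerB. Qed.

Lemma enlargeS (S T : set X) e : S `<=` T -> enlarge S e `<=` enlarge T e.
Proof. by move=> ST z [q Sq zq]; exists q => //; exact: ST. Qed.

Lemma farthest_ptsUl F G x d : F !=set0 -> G !=set0 -> bounded_set F -> bounded_set G ->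
  0 <= d -> farthest_dist G x < farthest_dist F x - d ->
  farthest_pts (F `|` G) x d = farthest_pts F x d.
Proof.
move=> F0 G0 Fb Gb d_ge0 GF.
rewrite /farthest_pts farthest_distU // max_l; last lra.
apply/seteqP; split => y /= [FGy le_y]; last by split => //; left.
case: FGy => // Gy; have := farthest_dist_ge x Gb Gy; lra.
Qed.

Lemma farthest_ptsU F G x d : F !=set0 -> G !=set0 -> bounded_set F -> bounded_set G ->
  farthest_dist F x = farthest_dist G x ->
  farthest_pts (F `|` G) x d = farthest_pts F x d `|` farthest_pts G x d.
Proof.
move=> F0 G0 Fb Gb FG; rewrite /farthest_pts farthest_distU // -FG maxxx.
apply/seteqP; split => y /=; first by move=> [[Fy|Gy] le_y]; [left|right].
by move=> [[Fy le_y]|[Gy le_y]]; split => //; [left|right].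
Qed.

Lemma sup_compact_on_infinitely_often F A x (u : nat -> X) :
  sup_compact_on F A -> A x -> infinitely_often (fun n => F (u n)) ->
  (fun n => `|x - u n|) @ \oo --> farthest_dist F x ->
  exists phi : nat -> nat, {homo phi : m n / (m < n)%N} /\
    exists2 y, F y & (u \o phi) @ \oo --> y.
Proof.
move=> Fsc Ax /infinitely_often_subseq[psi [psi_incr Fu]] u_far.
have [phi [phi_incr [y Fy u_y]]] :=
  Fsc x Ax (u \o psi) Fu (cvg_comp_increasing psi_incr u_far).
exists (psi \o phi); split; last by exists y.
by move=> m n mn; apply: psi_incr; exact: phi_incr.
Qed.

End FarthestPoints.

Section UnionOfFarthestPoints.
Context {R : realType} {X : normedModType R}.
Variables (A F G : set X).
Hypotheses (F0 : F !=set0) (G0 : G !=set0) (Fb : bounded_set F) (Gb : bounded_set G).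

Section DominatedUnion.
Hypothesis GF : forall x, A x -> farthest_dist G x < farthest_dist F x.

Lemma farthest_setUl x : A x -> farthest_set (F `|` G) x = farthest_set F x.
Proof. by move=> Ax; apply: farthest_ptsUl => //; rewrite subr0 GF. Qed.

Lemma remotal_onUl : remotal_on F A -> remotal_on (F `|` G) A.
Proof. by move=> Fr x Ax; rewrite farthest_setUl //; exact: Fr. Qed.

Lemma uniquely_remotal_onUl :
  uniquely_remotal_on F A -> uniquely_remotal_on (F `|` G) A.
Proof. by move=> Fu x Ax; rewrite farthest_setUl //; exact: Fu. Qed.

Lemma enlarge_farthest_ptsUl x c d e : A x ->
  0 < c -> c < farthest_dist F x - farthest_dist G x -> 0 < d ->
  farthest_pts F x d `<=` enlarge (farthest_set F x) e ->
  farthest_pts (F `|` G) x (Num.min d c) `<=` enlarge (farthest_set (F `|` G) x) e.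
Proof.
move=> Ax c_gt0 c_gap d_gt0 Fd.
have md : Num.min d c <= d by rewrite ge_min lexx.
have mc : Num.min d c <= c by rewrite ge_min lexx orbT.
rewrite farthest_setUl // farthest_ptsUl //; last 2 first.
- by rewrite le_min !ltW.
- lra.
by apply: subset_trans Fd; exact: farthest_ptsS.
Qed.

Lemma strongly_remotal_onUl :
  strongly_remotal_on F A -> strongly_remotal_on (F `|` G) A.
Proof.
move=> Fs x Ax e e_gt0; have [d d_gt0 Fd] := Fs x Ax e e_gt0.
have GFx := GF Ax.
exists (Num.min d ((farthest_dist F x - farthest_dist G x) / 2)).
  by rewrite lt_min d_gt0 /=; lra.
by apply: enlarge_farthest_ptsUl => //; lra.
Qed.

Lemma SUR_onUl : SUR_on F A -> SUR_on (F `|` G) A.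
Proof.
by move=> [Fu Fs]; split; [exact: uniquely_remotal_onUl | exact: strongly_remotal_onUl].
Qed.

Lemma sup_compact_onUl : sup_compact_on F A -> sup_compact_on (F `|` G) A.
Proof.
move=> Fsc x Ax u FGu u_far; have GFx := GF Ax.
rewrite farthest_distU // max_l ?ltW // in u_far.
have Fu : infinitely_often (fun n => F (u n)).
  apply: eventually_infinitely_often; near=> n.
  have Gu : farthest_dist G x < `|x - u n| by near: n; exact: cvgr_gt u_far _ GFx.
  by have [//|Gun] := FGu n; have := farthest_dist_ge x Gb Gun; lra.
have [phi [phi_incr [y Fy u_y]]] := sup_compact_on_infinitely_often Fsc Ax Fu u_far.
by exists phi; split => //; exists y => //; left.
Unshelve. all: by end_near.
Qed.

Lemma USUR_onUl : 0 < inf [set farthest_dist F x - farthest_dist G x | x in A] ->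
  USUR_on F A -> USUR_on (F `|` G) A.
Proof.
set S := [set _ | _ in A] => S_gt0 [Fu Fus]; split; first exact: uniquely_remotal_onUl.
have S_lb : has_lbound S.
  by apply: contrapT => S_nlb; move: S_gt0; rewrite inf_out ?ltxx // => -[].
move=> e e_gt0; have [d d_gt0 Fd] := Fus e e_gt0.
exists (Num.min d (inf S / 2)); first by rewrite lt_min d_gt0 /=; lra.
move=> x Ax; have : inf S <= farthest_dist F x - farthest_dist G x.
  by apply: ge_inf => //; exists x.
by move=> S_gap; apply: enlarge_farthest_ptsUl (Fd x Ax) => //; lra.
Qed.

End DominatedUnion.

Section EquidistantUnion.
Hypothesis FG : forall x, A x -> farthest_dist F x = farthest_dist G x.

Lemma remotal_onU : remotal_on F A -> remotal_on (F `|` G) A.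
Proof.
move=> Fr x Ax; rewrite /farthest_set farthest_ptsU ?FG //.
by have [y Fy] := Fr x Ax; exists y; left.
Qed.

Lemma strongly_remotal_onU : strongly_remotal_on F A -> strongly_remotal_on G A ->
  strongly_remotal_on (F `|` G) A.
Proof.
move=> Fs Gs x Ax e e_gt0.
have [d1 d1_gt0 Fd1] := Fs x Ax e e_gt0; have [d2 d2_gt0 Gd2] := Gs x Ax e e_gt0.
exists (Num.min d1 d2); first by rewrite lt_min d1_gt0.
have m1 : Num.min d1 d2 <= d1 by rewrite ge_min lexx.
have m2 : Num.min d1 d2 <= d2 by rewrite ge_min lexx orbT.
rewrite /farthest_set !farthest_ptsU ?FG //.
by move=> y [/(farthest_ptsS m1)/Fd1|/(farthest_ptsS m2)/Gd2]; apply: enlargeS.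
Qed.

Lemma sup_compact_onU : sup_compact_on F A -> sup_compact_on G A ->
  sup_compact_on (F `|` G) A.
Proof.
move=> Fsc Gsc x Ax u FGu u_far.
rewrite farthest_distU // -FG // maxxx in u_far.
have [Fu|Gu] := infinitely_often_or FGu.
  have [phi [phi_incr [y Fy u_y]]] := sup_compact_on_infinitely_often Fsc Ax Fu u_far.
  by exists phi; split => //; exists y => //; left.
rewrite FG // in u_far.
have [phi [phi_incr [y Gy u_y]]] := sup_compact_on_infinitely_often Gsc Ax Gu u_far.
by exists phi; split => //; exists y => //; right.
Qed.

End EquidistantUnion.
End UnionOfFarthestPoints.

Theorem theorem2p10 (R : realType) (X : completeNormedModType R)
    (A F1 F2 : set X) :
  A !=set0 ->
  F1 !=set0 -> closed F1 -> bounded_set F1 ->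
  F2 !=set0 -> closed F2 -> bounded_set F2 ->
  (* (1) *)
  ((forall x, A x -> farthest_dist F2 x < farthest_dist F1 x) ->
     (remotal_on F1 A -> remotal_on (F1 `|` F2) A) /\
     (uniquely_remotal_on F1 A -> uniquely_remotal_on (F1 `|` F2) A) /\
     (strongly_remotal_on F1 A -> strongly_remotal_on (F1 `|` F2) A) /\
     (SUR_on F1 A -> SUR_on (F1 `|` F2) A) /\
     (sup_compact_on F1 A -> sup_compact_on (F1 `|` F2) A) /\
     (0 < inf [set farthest_dist F1 x - farthest_dist F2 x | x in A] ->
        USUR_on F1 A -> USUR_on (F1 `|` F2) A)) /\
  (* (2) *)
  ((forall x, A x -> farthest_dist F1 x = farthest_dist F2 x) ->
     (sup_compact_on F1 A -> sup_compact_on F2 A ->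
        sup_compact_on (F1 `|` F2) A) /\
     (strongly_remotal_on F1 A -> strongly_remotal_on F2 A ->
        strongly_remotal_on (F1 `|` F2) A) /\
     (remotal_on F1 A -> remotal_on F2 A -> remotal_on (F1 `|` F2) A)).
Proof.
move=> _ F10 _ F1b F20 _ F2b; split => [F2F1|F1F2].
  split; first exact: remotal_onUl.
  split; first exact: uniquely_remotal_onUl.
  split; first exact: strongly_remotal_onUl.
  split; first exact: SUR_onUl.
  split; first exact: sup_compact_onUl.
  exact: USUR_onUl.
split; first exact: sup_compact_onU.
split; first exact: strongly_remotal_onU.
by move=> F1r _; exact: remotal_onU.
Qed.
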